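(* Let $f,f_0$ be probability densities on $[0,1]$ with $f_0$ bounded. Let $g\in L^\infty[0,1]$ and $C_1,C_2>0$ be such that $h(f,f_0)\|g\|_\infty\le C_1$ and $\|g\|_2\le C_2$. Then $$\Big|\int_0^1g^2(f-f_0)\Big|\le C_1^2+C_1\sqrt{4C_2^2\|f_0\|_\infty+C_1^2}.$$
   Context: $h$ is the Hellinger distance, $h(f,f_0)^2=\int_0^1(\sqrt f-\sqrt{f_0})^2$. $\|\cdot\|_2$ and $\|\cdot\|_\infty$ are the $L^2[0,1]$ and sup norms. *)

From HB Require Import structures.
From mathcomp Require Import all_boot all_order all_algebra.
From mathcomp Require Import all_classical all_reals all_analysis.
Set Implicit Arguments. Unset Strict Implicit. Unset Printing Implicit Defensive.
Import Order.TTheory GRing.Theory Num.Theory.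
Import numFieldNormedType.Exports.
Local Open Scope classical_set_scope.
Local Open Scope ring_scope.

Section Defs.
Variable R : realType.

Definition I01 : set R := `[0%R, 1%R].

Lemma measurable_I01 : measurable I01.
Proof. exact: measurable_itv. Qed.

Definition leb01 := mrestr (@lebesgue_measure R) measurable_I01.

Definition is_density01 (f : R -> R) : Prop :=
  measurable_fun I01 f /\ (forall x, I01 x -> 0 <= f x) /\
  (\int[@lebesgue_measure R]_(x in I01) (f x)%:E = 1)%E.

Definition hellinger (f f0 : R -> R) : R :=
  Num.sqrt (fine (\int[@lebesgue_measure R]_(x in I01)
                    ((Num.sqrt (f x) - Num.sqrt (f0 x)) ^+ 2)%:E)).

Definition norm2_01 (g : R -> R) : \bar R := Lnorm leb01 2%:E (EFin \o g).
Definition normoo_01 (g : R -> R) : \bar R := Lnorm leb01 +oo%E (EFin \o g).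
End Defs.

From HB Require Import structures.
From mathcomp Require Import all_boot all_order all_algebra.
From mathcomp Require Import all_classical all_reals all_analysis.
From mathcomp Require Import ring lra ess_sup_inf measurable_realfun.
Set Implicit Arguments.
Unset Strict Implicit.
Unset Printing Implicit Defensive.

Import Order.TTheory GRing.Theory Num.Theory.
Import numFieldNormedType.Exports.
Local Open Scope classical_set_scope.
Local Open Scope ring_scope.

(** Write [u = sqrt f - sqrt f0], so that [f - f0 = u^2 + 2 u sqrt f0], and
    for every [t > 0] the AM-GM inequality gives
    [|f - f0| <= (1 + t) u^2 + t^-1 f0].  Integrating against [g^2],
    [int g^2 u^2 <= |g|_oo^2 h(f,f0)^2 <= C1^2] and
    [int g^2 f0 <= |f0|_oo |g|_2^2 <= |f0|_oo C2^2]; the choice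
    [t = sqrt (4 C2^2 |f0|_oo + C1^2) / (2 C1)] yields the bound. *)

Section ge0_integral_mono.
Context d (T : measurableType d) (R : realType).
Variable mu : {measure set T -> \bar R}.
Local Open Scope ereal_scope.

(* Unlike [ge0_le_integral], no measurability is needed: the integral of a
   nonnegative function is a supremum over the simple functions below it. *)
Lemma ge0_le_integralT (f1 f2 : T -> \bar R) :
  (forall x, 0 <= f1 x) -> (forall x, f1 x <= f2 x) ->
  \int[mu]_x f1 x <= \int[mu]_x f2 x.
Proof.
move=> f10 f12; have f20 x : 0 <= f2 x by exact: le_trans (f10 x) (f12 x).
rewrite !ge0_integralTE //; apply: ge_ereal_sup => _ [h hf1 <-].
by apply: ereal_sup_ubound; exists h => // x; exact: le_trans (hf1 x) (f12 x).
Qed.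

End ge0_integral_mono.

Section integral_bounds.
Context d (T : measurableType d) (R : realType).
Variable mu : {measure set T -> \bar R}.
Local Open Scope ereal_scope.

Lemma ge0_integral_le_mrestr (D : set T) (mD : measurable D) (f : T -> \bar R) :
  (forall x, 0 <= f x) -> \int[mu]_(x in D) f x <= \int[mrestr mu mD]_x f x.
Proof.
move=> f0; rewrite (@eq_measure_integral _ _ _ _ (mrestr mu mD) mu); last first.
  by move=> A mA AD; rewrite /= /mrestr setIidl.
by rewrite integral_mkcond; apply: ge0_le_integralT => x; rewrite /patch;
  case: ifP.
Qed.

Lemma ae_mrestr (D : set T) (mD : measurable D) (P : T -> Prop) :
  {ae mrestr mu mD, forall x, P x} -> {ae mu, forall x, D x -> P x}.
Proof.
move=> [N [mN N0 NP]]; exists (N `&` D); split => //; first exact: measurableI.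
by move=> x /= /not_implyP [Dx nPx]; split => //; apply: NP.
Qed.

Lemma ae_imply (P Q : T -> Prop) : (forall x, P x -> Q x) ->
  {ae mu, forall x, P x} -> {ae mu, forall x, Q x}.
Proof. by move=> PQ; apply: filterS. Qed.

Lemma ae_ge0_le_integralZl (D : set T) (mD : measurable D) (f g : T -> R)
    (c : R) : (0 <= c)%R ->
  measurable_fun D f -> measurable_fun D g ->
  (forall x, D x -> 0 <= f x)%R -> (forall x, D x -> 0 <= g x)%R ->
  {ae mu, forall x, D x -> f x <= c * g x}%R ->
  \int[mu]_(x in D) (f x)%:E <= c%:E * \int[mu]_(x in D) (g x)%:E.
Proof.
move=> c0 mf mg f0 g0 fg.
rewrite -ge0_integralZl_EFin //; last exact/measurable_EFinP.
apply: ae_ge0_le_integral.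
- exact: mD.
- by move=> x Dx; rewrite lee_fin f0.
- exact/measurable_EFinP.
- by move=> x Dx; rewrite -EFinM lee_fin mulr_ge0 ?g0.
- by apply: emeasurable_funM; [exact: measurable_cst|exact/measurable_EFinP].
- by apply: filterS fg => x fgx Dx; rewrite -EFinM lee_fin fgx.
Qed.

Lemma ge0_integral_lincomb_le (D : set T) (mD : measurable D) (f g : T -> R)
    (a b A B : R) : (0 <= a)%R -> (0 <= b)%R ->
  measurable_fun D f -> measurable_fun D g ->
  (forall x, D x -> 0 <= f x)%R -> (forall x, D x -> 0 <= g x)%R ->
  \int[mu]_(x in D) (f x)%:E <= A%:E -> \int[mu]_(x in D) (g x)%:E <= B%:E ->
  \int[mu]_(x in D) (a * f x + b * g x)%:E <= (a * A + b * B)%:E.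
Proof.
move=> a0 b0 mf mg f0 g0 fA gB.
have f0E x : D x -> 0 <= (f x)%:E by move=> Dx; rewrite lee_fin f0.
have g0E x : D x -> 0 <= (g x)%:E by move=> Dx; rewrite lee_fin g0.
under eq_integral do rewrite EFinD !EFinM.
rewrite ge0_integralD //.
- rewrite !ge0_integralZl_EFin //; try exact/measurable_EFinP.
  by rewrite EFinD !EFinM leeD // lee_wpmul2l // lee_fin.
- by move=> x Dx; rewrite mule_ge0 // ?f0E.
- by apply: emeasurable_funM; [exact: measurable_cst|exact/measurable_EFinP].
- by move=> x Dx; rewrite mule_ge0 // ?g0E.
- by apply: emeasurable_funM; [exact: measurable_cst|exact/measurable_EFinP].
Qed.

Lemma normr_Rintegral_le (D : set T) (mD : measurable D) (f k : T -> R)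
    (c : R) : measurable_fun D f -> measurable_fun D k ->
  (forall x, D x -> `|f x| <= k x)%R -> \int[mu]_(x in D) (k x)%:E <= c%:E ->
  (`|Rintegral mu D f| <= c)%R.
Proof.
move=> mf mk fk kc.
have int_abs : \int[mu]_(x in D) `|f x|%:E <= c%:E.
  apply: (le_trans _ kc); apply: ge0_le_integral.
  - exact: mD.
  - by move=> x _; rewrite lee_fin.
  - by apply/measurable_EFinP; exact: measurableT_comp.
  - exact/measurable_EFinP.
  - by move=> x Dx; rewrite lee_fin fk.
have intf : mu.-integrable D (EFin \o f).
  apply/integrableP; split; first exact/measurable_EFinP.
  by apply: le_lt_trans int_abs _; exact: ltry.
rewrite -lee_fin EFin_normr_Rintegral //.
apply: le_trans int_abs; apply: le_abse_integral => //.
exact/measurable_EFinP.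
Qed.

End integral_bounds.

Section unit_interval.
Context (R : realType).
Local Notation mu := (@lebesgue_measure R).
Local Notation I := (@I01 R).
Local Open Scope ereal_scope.

Lemma leb01_setT : @leb01 R setT = 1.
Proof.
rewrite /leb01 /mrestr setTI /I01 lebesgue_measure_itv /= lte_fin ltr01.
by rewrite -EFinB subr0.
Qed.

Lemma normoo_01_ae_bound (g : R -> R) : normoo_01 g < +oo ->
  {ae mu, forall x, I x -> `|g x| <= fine (normoo_01 g)}%R.
Proof.
move=> g_fin.
apply: (@ae_mrestr _ _ _ mu _ (@measurable_I01 R)).
have g_ge0 : 0 <= normoo_01 g by exact: Lnorm_ge0.
have gE : normoo_01 g = ess_sup (@leb01 R) (abse \o (EFin \o g)).
  have leb01_gt0 : 0 < @leb01 R setT by rewrite leb01_setT.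
  by rewrite /normoo_01 unlock leb01_gt0.
have g_fin_num : normoo_01 g \is a fin_num by rewrite ge0_fin_numE.
apply: filterS (ess_sup_ge (@leb01 R) (abse \o (EFin \o g))) => x.
by rewrite /= -gE -lee_fin fineK.
Qed.

Lemma integral_sqr_le_norm2_01 (g : R -> R) (C : R) : (0 <= C)%R ->
  norm2_01 g <= C%:E -> \int[mu]_(x in I) (g x ^+ 2)%:E <= (C ^+ 2)%:E.
Proof.
move=> C0 gC.
have g2_ge0 x : 0 <= (g x ^+ 2)%:E by rewrite lee_fin sqr_ge0.
apply: le_trans (@ge0_integral_le_mrestr _ _ _ mu _ (@measurable_I01 R) _ g2_ge0) _.
have -> : \int[@leb01 R]_x (g x ^+ 2)%:E = norm2_01 g `^ 2.
  rewrite /norm2_01 poweR_Lnorm ?pnatr_eq0 //; apply: eq_integral => x _.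
  by rewrite /= -[2%R]/(2%:R) powR_mulrn ?real_normK ?num_real.
have := @gt0_ler_poweR R 2 ltac:(by []) (norm2_01 g) C%:E.
rewrite !in_itv /= Lnorm_ge0 lee_fin C0 !leey => /(_ isT isT gC).
by rewrite /= -[2%R]/(2%:R) powR_mulrn.
Qed.

End unit_interval.

Section sqrt_inequalities.
Context (R : rcfType).

Lemma sqr_subr_sqrt_le (a b : R) : 0 <= a -> 0 <= b ->
  (Num.sqrt a - Num.sqrt b) ^+ 2 <= a + b.
Proof.
move=> a0 b0; have := mulr_ge0 (sqrtr_ge0 a) (sqrtr_ge0 b).
rewrite sqrrB !sqr_sqrtr // mulr2n; lra.
Qed.

Lemma subr_sqrt_decomp (a b : R) : 0 <= a -> 0 <= b ->
  a - b = (Num.sqrt a - Num.sqrt b) ^+ 2 + 2 * (Num.sqrt a - Num.sqrt b) * Num.sqrt b.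
Proof.
by move=> a0 b0; rewrite -{1}(sqr_sqrtr a0) -{1}(sqr_sqrtr b0); ring.
Qed.

Lemma normr_sqrD_mul2_le (u v t : R) : 0 < t ->
  `|u ^+ 2 + 2 * u * v| <= (1 + t) * u ^+ 2 + t^-1 * v ^+ 2.
Proof.
move=> t_gt0.
have amgm : 2 * `|u * v| <= t * u ^+ 2 + t^-1 * v ^+ 2.
  have sq_ge0 : 0 <= t^-1 * (t * `|u| - `|v|) ^+ 2.
    by rewrite mulr_ge0 ?sqr_ge0 // invr_ge0 ltW.
  have -> : t * u ^+ 2 + t^-1 * v ^+ 2 =
      t^-1 * (t * `|u| - `|v|) ^+ 2 + 2 * `|u * v|.
    rewrite -[u ^+ 2]real_normK ?num_real // -[v ^+ 2]real_normK ?num_real //.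
    by rewrite normrM; field; rewrite gt_eqF.
  by rewrite lerDr.
rewrite [(1 + t) * _]mulrDl mul1r -addrA; apply: le_trans (ler_normD _ _) _.
by rewrite ger0_norm ?sqr_ge0 // lerD2l -mulrA normrM ger0_norm.
Qed.

Lemma exists_tradeoff_le (a b : R) : 0 < a -> 0 <= b ->
  exists2 t, 0 < t &
    (1 + t) * a ^+ 2 + t^-1 * b <= a ^+ 2 + a * Num.sqrt (4 * b + a ^+ 2).
Proof.
move=> a_gt0 b0; set S := Num.sqrt _.
have SS : S ^+ 2 = 4 * b + a ^+ 2.
  by rewrite sqr_sqrtr //; have := sqr_ge0 a; lra.
have S_gt0 : 0 < S.
  by rewrite sqrtr_gt0; have := exprn_gt0 2 a_gt0; lra.
exists (S / (2 * a)); first by rewrite divr_gt0 ?mulr_gt0.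
rewrite invf_div.
have -> : (1 + S / (2 * a)) * a ^+ 2 = a ^+ 2 + a * S / 2.
  by field; rewrite gt_eqF.
rewrite -addrA lerD2l.
have bS : 2 * a / S * b <= a * S / 2.
  rewrite mulrAC ler_pdivrMr //.
  have -> : a * S / 2 * S = a * S ^+ 2 / 2 by field.
  rewrite SS; have := mulr_ge0 (ltW a_gt0) (sqr_ge0 a); lra.
lra.
Qed.

Lemma normr_sqr_mul_subr_le (a b c t : R) : 0 <= a -> 0 <= b -> 0 < t ->
  `|c ^+ 2 * (a - b)| <=
    (1 + t) * (c ^+ 2 * (Num.sqrt a - Num.sqrt b) ^+ 2) + t^-1 * (c ^+ 2 * b).
Proof.
move=> a0 b0 t_gt0; rewrite normrM ger0_norm ?sqr_ge0 // subr_sqrt_decomp //.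
have := normr_sqrD_mul2_le (Num.sqrt a - Num.sqrt b) (Num.sqrt b) t_gt0.
rewrite sqr_sqrtr // => /(ler_wpM2l (sqr_ge0 c)) bound; apply: (le_trans bound).
by rewrite le_eqVlt; apply/orP; left; apply/eqP; ring.
Qed.

End sqrt_inequalities.

Lemma measurable_fun_sqrt d (T : measurableType d) (R : realType) (D : set T)
    (f : T -> R) :
  measurable_fun D f -> measurable_fun D (fun x => Num.sqrt (f x)).
Proof.
move=> mf; apply: measurableT_comp mf.
exact: continuous_measurable_fun (@sqrt_continuous R).
Qed.

Section densities.
Context (R : realType).
Local Notation mu := (@lebesgue_measure R).
Local Notation I := (@I01 R).
Local Open Scope ereal_scope.

Lemma measurable_fun_sqrt_diff_sqr (f f0 : R -> R) :
  measurable_fun I f -> measurable_fun I f0 ->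
  measurable_fun I (fun x => (Num.sqrt (f x) - Num.sqrt (f0 x)) ^+ 2)%R.
Proof.
by move=> mf mf0; apply/measurable_funX/measurable_funB; exact: measurable_fun_sqrt.
Qed.

Lemma integral_hellinger (f f0 : R -> R) : is_density01 f -> is_density01 f0 ->
  \int[mu]_(x in I) ((Num.sqrt (f x) - Num.sqrt (f0 x)) ^+ 2)%:E =
    ((hellinger f f0) ^+ 2)%:E.
Proof.
move=> [mf [f_ge0 f1]] [mf0 [f0_ge0 f01]].
have mU := measurable_fun_sqrt_diff_sqr mf mf0.
have U_ge0 : 0 <= \int[mu]_(x in I) ((Num.sqrt (f x) - Num.sqrt (f0 x)) ^+ 2)%:E.
  by apply: integral_ge0 => x _; rewrite lee_fin sqr_ge0.
have U_le2 : \int[mu]_(x in I) ((Num.sqrt (f x) - Num.sqrt (f0 x)) ^+ 2)%:E <= 2%:E.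
  apply: (@le_trans _ _ (\int[mu]_(x in I) ((f x)%:E + (f0 x)%:E))).
    apply: ge0_le_integral.
    - exact: measurable_I01.
    - by move=> x _; rewrite lee_fin sqr_ge0.
    - exact/measurable_EFinP.
    - by apply: emeasurable_funD; exact/measurable_EFinP.
    - by move=> x Ix; rewrite -EFinD lee_fin sqr_subr_sqrt_le ?f_ge0 ?f0_ge0.
  rewrite ge0_integralD //; first by rewrite f1 f01.
  - exact: measurable_I01.
  - exact/measurable_EFinP.
  - exact/measurable_EFinP.
rewrite /hellinger sqr_sqrtr ?fine_ge0 // fineK // ge0_fin_numE //.
exact: le_lt_trans U_le2 (ltry _).
Qed.

Lemma integral_sqr_mul_hellinger_le (f f0 g : R -> R) (C1 : R) :
  is_density01 f -> is_density01 f0 ->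
  measurable_fun I g -> normoo_01 g < +oo ->
  (hellinger f f0)%:E * normoo_01 g <= C1%:E ->
  \int[mu]_(x in I) (g x ^+ 2 * (Num.sqrt (f x) - Num.sqrt (f0 x)) ^+ 2)%:E
    <= (C1 ^+ 2)%:E.
Proof.
move=> df df0 mg g_fin hgC1; have [mf _] := df; have [mf0 _] := df0.
set N := fine (normoo_01 g).
have N_ge0 : (0 <= N)%R by rewrite fine_ge0 // Lnorm_ge0.
have hN_ge0 : (0 <= hellinger f f0 * N)%R by rewrite mulr_ge0 ?sqrtr_ge0.
have hN_le : (hellinger f f0 * N <= C1)%R.
  by rewrite -lee_fin EFinM /N fineK // ge0_fin_numE // Lnorm_ge0.
have mU := measurable_fun_sqrt_diff_sqr mf mf0.
apply: le_trans (@ae_ge0_le_integralZl _ _ _ mu _ (@measurable_I01 R) _ _ _ (sqr_ge0 N)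
  (measurable_funM (measurable_funX 2 mg) mU) mU _ _ _) _.
- by move=> x _; rewrite mulr_ge0 ?sqr_ge0.
- by move=> x _; rewrite sqr_ge0.
- apply: ae_imply (normoo_01_ae_bound g_fin) => x gN Ix.
  rewrite ler_wpM2r ?sqr_ge0 // -[(g x ^+ 2)%R]real_normK ?num_real //.
  by rewrite ler_sqr ?nnegrE ?gN.
rewrite integral_hellinger // -EFinM lee_fin -exprMn mulrC.
by rewrite ler_sqr ?nnegrE // (le_trans hN_ge0).
Qed.

Lemma integral_sqr_mul_le_normoo (f0 g : R -> R) (C2 : R) :
  measurable_fun I f0 -> (forall x, I x -> 0 <= f0 x)%R -> normoo_01 f0 < +oo ->
  measurable_fun I g -> (0 <= C2)%R -> norm2_01 g <= C2%:E ->
  \int[mu]_(x in I) (g x ^+ 2 * f0 x)%:E <= (fine (normoo_01 f0) * C2 ^+ 2)%:E.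
Proof.
move=> mf0 f0_ge0 f0_fin mg C2_ge0 gC2.
have M_ge0 : (0 <= fine (normoo_01 f0))%R by rewrite fine_ge0 // Lnorm_ge0.
apply: le_trans (@ae_ge0_le_integralZl _ _ _ mu _ (@measurable_I01 R) _ _ _ M_ge0
  (measurable_funM (measurable_funX 2 mg) mf0) (measurable_funX 2 mg) _ _ _) _.
- by move=> x Ix; rewrite mulr_ge0 ?sqr_ge0 ?f0_ge0.
- by move=> x _; rewrite sqr_ge0.
- apply: ae_imply (normoo_01_ae_bound f0_fin) => x f0M Ix.
  by rewrite /= mulrC ler_wpM2r ?sqr_ge0 // (le_trans (ler_norm _) (f0M Ix)).
by rewrite EFinM lee_wpmul2l ?lee_fin // integral_sqr_le_norm2_01.
Qed.

Lemma normr_Rintegral_sqr_mul_density_diff_le (f f0 g : R -> R) (C1 C2 t : R) :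
  is_density01 f -> is_density01 f0 -> normoo_01 f0 < +oo ->
  measurable_fun I g -> normoo_01 g < +oo -> (0 <= C2)%R -> (0 < t)%R ->
  (hellinger f f0)%:E * normoo_01 g <= C1%:E -> norm2_01 g <= C2%:E ->
  (`|Rintegral mu I (fun x => g x ^+ 2 * (f x - f0 x))|
    <= (1 + t) * C1 ^+ 2 + t^-1 * (fine (normoo_01 f0) * C2 ^+ 2))%R.
Proof.
move=> df df0 f0_fin mg g_fin C2_ge0 t_gt0 hgC1 gC2.
have [mf [f_ge0 _]] := df; have [mf0 [f0_ge0 _]] := df0.
have mg2 := measurable_funX 2 mg.
have mgU := measurable_funM mg2 (measurable_fun_sqrt_diff_sqr mf mf0).
have mgf0 := measurable_funM mg2 mf0.
apply: (@normr_Rintegral_le _ _ _ mu _ (@measurable_I01 R) _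
  (fun x => (1 + t) * (g x ^+ 2 * (Num.sqrt (f x) - Num.sqrt (f0 x)) ^+ 2)
            + t^-1 * (g x ^+ 2 * f0 x))%R).
- exact/measurable_funM/measurable_funB.
- by apply: measurable_funD; apply: measurable_funM => //; exact: measurable_cst.
- by move=> x Ix; exact: normr_sqr_mul_subr_le (f_ge0 x Ix) (f0_ge0 x Ix) t_gt0.
have t1_ge0 : (0 <= 1 + t)%R by rewrite addr_ge0 ?ltW.
have tV_ge0 : (0 <= t^-1)%R by rewrite invr_ge0 ltW.
apply: (@ge0_integral_lincomb_le _ _ _ mu _ (@measurable_I01 R) _ _ _ _ _ _
  t1_ge0 tV_ge0 mgU mgf0).
- by move=> x _; rewrite mulr_ge0 ?sqr_ge0.
- by move=> x Ix; rewrite mulr_ge0 ?sqr_ge0 ?f0_ge0.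
- exact: integral_sqr_mul_hellinger_le.
- exact: integral_sqr_mul_le_normoo.
Qed.

End densities.

Theorem lemma6 (R : realType) (f f0 g : R -> R) (C1 C2 : R) :
  is_density01 f -> is_density01 f0 ->
  (normoo_01 f0 < +oo)%E ->
  measurable_fun (@I01 R) g -> (normoo_01 g < +oo)%E ->
  0 < C1 -> 0 < C2 ->
  ((hellinger f f0)%:E * normoo_01 g <= C1%:E)%E ->
  (norm2_01 g <= C2%:E)%E ->
  `| Rintegral (@lebesgue_measure R) (@I01 R) (fun x => g x ^+ 2 * (f x - f0 x)) |
    <= C1 ^+ 2 + C1 * Num.sqrt (4 * C2 ^+ 2 * fine (normoo_01 f0) + C1 ^+ 2).
Proof.
move=> df df0 f0_fin mg g_fin C1_gt0 C2_gt0 hgC1 gC2.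
have M_ge0 : 0 <= fine (normoo_01 f0) by rewrite fine_ge0 // Lnorm_ge0.
have [t t_gt0 tC] :=
  exists_tradeoff_le C1_gt0 (mulr_ge0 M_ge0 (sqr_ge0 C2)).
rewrite -mulrA [_ * fine _]mulrC; apply: le_trans tC.
exact: normr_Rintegral_sqr_mul_density_diff_le (ltW C2_gt0) t_gt0 hgC1 gC2.
Qed.
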